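(* Let $R$ be a finite ring with identity, $\alpha\in(0,1)$, and let $\pi_U$ be the stationary distribution of the Markov chain $(X^U_t)$ on $R$ defined below. Let $n=|R|$ and $m=|U_R|$. Then for every unit $u\in U_R$, \[\pi_U(u)=\frac{\alpha}{n-m+m\alpha}.\]
   Context: $U_R$ is the group of units of $R$. The chain $(X^U_t)$: at each step an independent coin with Heads probability $\alpha$ is tossed; on Heads, $X_{t+1}=X_t+Y$ with $Y$ uniform on $R$; on Tails, $X_{t+1}=Z\cdot X_t$ with $Z$ uniform on $R$ (all independent). *)

From HB Require Import structures.
From mathcomp Require Import all_boot all_order all_algebra.
Set Implicit Arguments. Unset Strict Implicit. Unset Printing Implicit Defensive.
Import Order.TTheory GRing.Theory Num.Theory.
Local Open Scope ring_scope.

(* The chain X^U on a finite ring A (with identity, carrying its canonical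
   unit structure): with probability alpha, X_{t+1} = X_t + Y (Y uniform on A);
   with probability 1 - alpha, X_{t+1} = Z * X_t (Z uniform on A). *)
Definition transU (A : finUnitRingType) (K : realFieldType) (alpha : K)
  (x y : A) : K :=
  alpha * (#|[pred w : A | x + w == y]|%:R / #|A|%:R)
  + (1 - alpha) * (#|[pred z : A | z * x == y]|%:R / #|A|%:R).

Definition stationaryU (A : finUnitRingType) (K : realFieldType) (alpha : K)
  (pi : A -> K) : Prop :=
  (forall x, 0 <= pi x) /\ (\sum_(x : A) pi x = 1) /\
  (forall y : A, \sum_(x : A) pi x * transU alpha x y = pi y).

From HB Require Import structures.
From mathcomp Require Import all_boot all_order all_algebra.
From mathcomp Require Import ring.
Import Order.TTheory GRing.Theory Num.Theory.
Set Implicit Arguments. Unset Strict Implicit. Unset Printing Implicit Defensive.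
Local Open Scope ring_scope.

(* A step of the chain lands on a unit y from x by addition with probability
   alpha / n whatever x is, and by multiplication with probability
   (1 - alpha) / n if x is a unit and 0 otherwise (z x = y forces x to be
   left invertible, hence a unit in a finite ring).  So pi is constant on the
   units, say equal to c, and the stationarity equation at a unit reads
   n c = alpha + (1 - alpha) m c. *)

Lemma finring_unit_of_linv (A : finUnitRingType) (l x : A) :
  l * x = 1 -> x \is a GRing.unit.
Proof.
move=> lx1; have mulx_inj : injective (fun r : A => x * r).
  by move=> r1 r2 /= eq_xr; rewrite -[r1]mul1r -[r2]mul1r -lx1 -!mulrA eq_xr.
have [g _ mulxK] := injF_bij mulx_inj.
have xr1 : x * g 1 = 1 by rewrite mulxK.
have l_eq : l = g 1 by rewrite -[l]mulr1 -{1}xr1 mulrA lx1 mul1r.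
by apply/unitrP; exists l; split; last rewrite l_eq.
Qed.

Lemma card_addr_eq (V : finZmodType) (x y : V) :
  #|[pred w : V | x + w == y]| = 1%N.
Proof.
apply: (@eq_card1 _ (y - x)) => w; rewrite !inE.
by apply/eqP/eqP => [<-|->]; rewrite addrC ?addKr ?subrK.
Qed.

Lemma card_mulr_eq_unit (A : finUnitRingType) (x y : A) :
  y \is a GRing.unit -> #|[pred z : A | z * x == y]| = (x \is a GRing.unit).
Proof.
move=> Uy; have [Ux | nUx] := boolP (x \is a GRing.unit).
  apply: (@eq_card1 _ (y / x)) => z; rewrite !inE.
  by apply/eqP/eqP => [<-|->]; rewrite ?mulrK ?divrK.
apply: eq_card0 => z; rewrite !inE; apply/negP => /eqP zx_y.
apply/negP: nUx; rewrite negbK; apply: (@finring_unit_of_linv _ (y^-1 * z)).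
by rewrite -mulrA zx_y mulVr.
Qed.

Section StationaryOnUnits.

Variables (A : finUnitRingType) (K : realFieldType) (alpha : K).

Lemma transU_to_unit (x y : A) : y \is a GRing.unit ->
  transU alpha x y = (alpha + (1 - alpha) * (x \is a GRing.unit)%:R) / #|A|%:R.
Proof. by move=> Uy; rewrite /transU card_addr_eq card_mulr_eq_unit //; ring. Qed.

Variables (pi : A -> K) (hpi : stationaryU alpha pi).

Lemma stationaryU_unit (y : A) : y \is a GRing.unit ->
  pi y = (alpha + (1 - alpha) * \sum_(x | x \is a GRing.unit) pi x) / #|A|%:R.
Proof.
case: hpi => _ [sum_pi1 pi_stat] Uy; rewrite -pi_stat.
rewrite (eq_bigr (fun x => alpha / #|A|%:R * pi x
                 + (1 - alpha) / #|A|%:R * (pi x *+ (x \is a GRing.unit)))).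
  rewrite big_split /= -!mulr_sumr sum_pi1 mulr1 [in RHS]big_mkcond /=.
  by under eq_bigr do rewrite mulrb; ring.
by move=> x _; rewrite transU_to_unit // -mulr_natr; ring.
Qed.

Lemma sum_stationaryU_units (u : A) : u \is a GRing.unit ->
  \sum_(x | x \is a GRing.unit) pi x = #|[pred v : A | v \is a GRing.unit]|%:R * pi u.
Proof.
move=> Uu; rewrite (eq_bigr (fun=> pi u)); last first.
  by move=> x Ux; rewrite (stationaryU_unit Ux) (stationaryU_unit Uu).
by rewrite sumr_const mulr_natl; congr (_ *+ _); apply: eq_card.
Qed.

End StationaryOnUnits.

Lemma solve_balance_eq (F : fieldType) (a n m c : F) :
  n != 0 -> n - m + m * a != 0 ->
  c = (a + (1 - a) * (m * c)) / n -> c = a / (n - m + m * a).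
Proof.
move=> n_neq0 D_neq0 c_eq; apply: (mulIf D_neq0); rewrite divfK //.
have cn : c * n = a + (1 - a) * (m * c) by rewrite {1}c_eq divfK.
by rewrite mulrDr mulrBr cn; ring.
Qed.

Theorem corollary3p4 (A : finUnitRingType) (K : realFieldType) (alpha : K)
  (halpha : 0 < alpha < 1) (pi : A -> K) (hpi : stationaryU alpha pi)
  (u : A) (hu : u \is a GRing.unit) :
  pi u = alpha / (#|A|%:R - #|[pred v : A | v \is a GRing.unit]|%:R
                  + #|[pred v : A | v \is a GRing.unit]|%:R * alpha).
Proof.
case/andP: halpha => alpha_gt0 _.
set n := #|A|; set m := #|[pred v : A | v \is a GRing.unit]|.
have m_gt0 : (0 < m)%N by apply/card_gt0P; exists 1; rewrite inE unitr1.
have m_le_n : (m <= n)%N by apply: max_card.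
have n_neq0 : n%:R != 0 :> K by rewrite pnatr_eq0 -lt0n (leq_trans m_gt0).
have D_neq0 : n%:R - m%:R + m%:R * alpha != 0 :> K.
  by rewrite lt0r_neq0 // ltr_wpDl ?subr_ge0 ?ler_nat // mulr_gt0 ?ltr0n.
apply: solve_balance_eq => //.
by rewrite -(sum_stationaryU_units hpi hu); apply: stationaryU_unit.
Qed.
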